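(* Let $\Omega$ be a finite set, $V_\Omega=\mathbb{R}^\Omega$, and $V_\Upsilon,V_\Gamma\le V_\Omega$. Let $\mathcal{P}$, $\mathcal{Q}$, $\mathcal{R}$ be orthogonal decompositions of $V_\Omega$, $V_\Upsilon$, $V_\Gamma$, respectively, and write $\mathbf{I}_{\mathcal{R}}=\sum_{\mathbf{R}\in\mathcal{R}}\mathbf{R}$. Suppose $\mathcal{Q}$ and $\mathcal{R}$ are both structure balanced in relation to $\mathcal{P}$, with efficiency factors $\lambda_{\mathbf{PQ}}$ and $\lambda_{\mathbf{PR}}$, and suppose that for all $\mathbf{P}\in\mathcal{P}$ and $\mathbf{Q}\in\mathcal{Q}$, if $\mathbf{PQ}\neq\mathbf{0}$ and $\mathbf{P}\mathbf{I}_{\mathcal{R}}\neq\mathbf{0}$ then $\mathbf{P}\vartriangleright\mathbf{Q}=\mathbf{P}$. Then $\mathcal{R}$ is structure balanced in relation to $\mathcal{P}\vartriangleright\mathcal{Q}$, with $\lambda_{\mathbf{P}\vartriangleright\mathbf{Q},\mathbf{R}}=\lambda_{\mathbf{PR}}$ whenever $\lambda_{\mathbf{PQ}}\neq0$, and $\lambda_{\mathbf{P}\vdash\mathcal{Q},\mathbf{R}}=\lambda_{\mathbf{PR}}$ whenever $\mathbf{P}\vdash\mathcal{Q}\neq\mathbf{0}$. Moreover, $$(\mathcal{P}\vartriangleright\mathcal{Q})\vartriangleright\mathcal{R}=\{\mathbf{P}\vartriangleright\mathbf{R}:\mathbf{P}\in\mathcal{P},\mathbf{R}\in\mathcal{R},\lambda_{\mathbf{PR}}\neq0\}\cup\{\mathbf{P}\vdash\mathcal{R}:\mathbf{P}\in\mathcal{P},\mathbf{P}\mathbf{I}_{\mathcal{R}}\neq\mathbf{0}\}$$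 $$\cup\{\mathbf{P}\vartriangleright\mathbf{Q}:\mathbf{P}\in\mathcal{P},\mathbf{Q}\in\mathcal{Q},\lambda_{\mathbf{PQ}}\neq0,\mathbf{P}\mathbf{I}_{\mathcal{R}}=\mathbf{0}\}\cup\{\mathbf{P}\vdash\mathcal{Q}:\mathbf{P}\in\mathcal{P},\mathbf{P}\mathbf{I}_{\mathcal{R}}=\mathbf{0}\}.$$
   Context: $V_\Omega$ carries the standard inner product; all matrices are $\Omega\times\Omega$. An orthogonal decomposition of a subspace $W\le V_\Omega$ is a finite set of nonzero symmetric idempotent matrices that are mutually orthogonal and whose sum is the orthogonal projector onto $W$; when a decomposition is described by a list, zero matrices are discarded. For projectors $\mathbf{A},\mathbf{B}$: $\mathbf{B}$ has first-order balance in relation to $\mathbf{A}$ if $\mathbf{BAB}=\lambda_{\mathbf{AB}}\mathbf{B}$ for a scalar $\lambda_{\mathbf{AB}}$ (efficiency factor); $\lambda_{\mathbf{AB}}=0$ iff $\mathbf{AB}=\mathbf{0}$; if $\lambda_{\mathbf{AB}}\ne0$, $\mathbf{A}\vartriangleright\mathbf{B}=\lambda_{\mathbf{AB}}^{-1}\mathbf{ABA}$. A set $\mathcal{B}$ of projectors is structure balanced in relation to a set $\mathcal{A}$ of mutually orthogonal projectors if every $\mathbf{B}\in\mathcal{B}$ has first-order balance in relation to every $\mathbf{A}\in\mathcal{A}$, and $\mathbf{B}_1\mathbf{A}\mathbf{B}_2=\mathbf{0}$ for all $\mathbf{A}\in\mathcal{A}$ and distinct $\mathbf{B}_1,\mathbf{B}_2\in\mathcal{B}$.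 Then for $\mathbf{A}\in\mathcal{A}$, $\mathbf{A}\vdash\mathcal{B}=\mathbf{A}-\sum'_{\mathbf{B}}\mathbf{A}\vartriangleright\mathbf{B}$ (sum over $\mathbf{B}$ with $\lambda_{\mathbf{AB}}\ne0$), and $\mathcal{A}\vartriangleright\mathcal{B}=\{\mathbf{A}\vartriangleright\mathbf{B}:\mathbf{A}\in\mathcal{A},\mathbf{B}\in\mathcal{B},\lambda_{\mathbf{AB}}\neq0\}\cup\{\mathbf{A}\vdash\mathcal{B}:\mathbf{A}\in\mathcal{A}\}$ (zeros discarded). $\lambda_{\mathbf{P}\vartriangleright\mathbf{Q},\mathbf{R}}$ and $\lambda_{\mathbf{P}\vdash\mathcal{Q},\mathbf{R}}$ denote the efficiency factors of $\mathbf{R}$ in relation to $\mathbf{P}\vartriangleright\mathbf{Q}$ and $\mathbf{P}\vdash\mathcal{Q}$. *)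

(* Matrices over a real field R, indexed by 'I_n (Omega = 'I_n). *)
From HB Require Import structures.
From mathcomp Require Import all_boot all_order all_algebra.
From Stdlib Require Import ClassicalEpsilon.
Set Implicit Arguments. Unset Strict Implicit. Unset Printing Implicit Defensive.
Import Order.TTheory GRing.Theory Num.Theory.
Local Open Scope ring_scope.

Section Defs.
Variables (R : realFieldType) (n : nat).
Implicit Types (A B M W : 'M[R]_n) (S As Bs : seq 'M[R]_n).

Definition projector M := M^T = M /\ M *m M = M.

(* M is the orthogonal projector onto the subspace W (= row space of W) *)
Definition orth_proj_onto M W := projector M /\ (M == W)%MS.

Definition mutually_orth S :=
  forall M1 M2, M1 \in S -> M2 \in S -> M1 != M2 -> M1 *m M2 = 0.

(* orthogonal decomposition of the subspace W (a finite set, as a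
   duplicate-free list) *)
Definition orth_decomp S W :=
  [/\ uniq S, (forall M, M \in S -> M != 0 /\ projector M),
      mutually_orth S & orth_proj_onto (\sum_(M <- S) M) W].

Definition fob A B := exists lam : R, B *m A *m B = lam *: B.

Definition eff A B : R :=
  epsilon (inhabits 0) (fun lam : R => B *m A *m B = lam *: B).

Definition tri A B := (eff A B)^-1 *: (A *m B *m A).

Definition struct_bal Bs As :=
  [/\ (forall A, A \in As -> projector A), mutually_orth As,
      (forall B, B \in Bs -> projector B),
      (forall A B, A \in As -> B \in Bs -> fob A B) &
      (forall A B1 B2, A \in As -> B1 \in Bs -> B2 \in Bs -> B1 != B2 ->
         B1 *m A *m B2 = 0)].

Definition vdash A Bs := A - \sum_(B <- Bs | eff A B != 0) tri A B.

Definition triset As Bs : seq 'M[R]_n :=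
  [seq M <- [seq tri A B | A <- As, B <- [seq B <- Bs | eff A B != 0]]
            ++ [seq vdash A Bs | A <- As] | M != 0].

End Defs.

From HB Require Import structures.
From mathcomp Require Import all_boot all_order all_algebra.
From Stdlib Require Import ClassicalEpsilon.
Import Order.TTheory GRing.Theory Num.Theory.
Local Open Scope ring_scope.
Set Implicit Arguments. Unset Strict Implicit.

(* Every member A of P |> Q satisfies PA = AP = A.  If P I_R <> 0, the
   hypothesis forces A = P: each P |> Q with lambda_PQ <> 0 equals P, and then
   P |- Q is 0, or P itself when no lambda_PQ is nonzero.  If P I_R = 0, then P,
   hence A, is orthogonal to every R.  Either way R1 A R2 = R1 P R2 for all R1, R2
   in R, which gives structure balance of R relative to P |> Q with the
   efficiency factors of P, and A |- R = A whenever P I_R = 0; sorting the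
   members of (P |> Q) |> R by whether P I_R vanishes yields the formula. *)

Section Projectors.
Variables (R : realFieldType) (n : nat).
Implicit Types (A B M P Q : 'M[R]_n).

Lemma projector_mul_eq0C P Q :
  projector P -> projector Q -> P *m Q = 0 -> Q *m P = 0.
Proof. by move=> [PT _] [QT _] PQ; rewrite -[Q]QT -[P]PT -trmx_mul PQ trmx0. Qed.

Lemma projector_mul_idC P A :
  projector P -> projector A -> P *m A = A -> A *m P = A.
Proof. by move=> [PT _] [AT _] PA; rewrite -[A in LHS]AT -[P]PT -trmx_mul PA. Qed.

Lemma eff_fob A B : fob A B -> B *m A *m B = eff A B *: B.
Proof. exact: epsilon_spec. Qed.

Lemma eff_unique A B lam : B != 0 -> B *m A *m B = lam *: B -> eff A B = lam.
Proof.
move=> B0 BAB; have := eff_fob (ex_intro _ lam BAB); rewrite BAB => /eqP.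
by rewrite -subr_eq0 -scalerBl scaler_eq0 (negbTE B0) orbF subr_eq0 => /eqP.
Qed.

Lemma mul_neq0_eff A B : B != 0 -> eff A B != 0 -> A *m B != 0.
Proof.
move=> B0; apply: contra => /eqP AB0; apply/eqP/eff_unique => //.
by rewrite -mulmxA AB0 mulmx0 scale0r.
Qed.

Lemma tri_eff0 A B : eff A B = 0 -> tri A B = 0.
Proof. by move=> e0; rewrite /tri e0 invr0 scale0r. Qed.

Lemma mul_proj_tri P Q : projector P -> P *m tri P Q = tri P Q.
Proof. by move=> [_ PP]; rewrite /tri -scalemxAr !mulmxA PP. Qed.

Lemma tri_mul_proj P Q : projector P -> tri P Q *m P = tri P Q.
Proof. by move=> [_ PP]; rewrite /tri -scalemxAl -!mulmxA PP. Qed.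

Lemma tri_mulE P Q1 Q2 : projector P ->
  tri P Q1 *m tri P Q2 = ((eff P Q1)^-1 * (eff P Q2)^-1) *: (P *m (Q1 *m P *m Q2) *m P).
Proof.
move=> [_ PP]; rewrite /tri -scalemxAr -scalemxAl scalerA [_ * _]mulrC.
by rewrite !mulmxA -(mulmxA (P *m Q1) P P) PP.
Qed.

Lemma tri_mul_tri_eq0 P Q1 Q2 :
  projector P -> Q1 *m P *m Q2 = 0 -> tri P Q1 *m tri P Q2 = 0.
Proof. by move=> projP QPQ; rewrite tri_mulE // QPQ mulmx0 mul0mx scaler0. Qed.

Lemma projector_tri P Q : projector P -> projector Q -> fob P Q -> projector (tri P Q).
Proof.
move=> projP [QT _] /eff_fob QPQ; have [PT _] := projP; split.
  by rewrite /tri linearZ /= !trmx_mul PT QT mulmxA.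
rewrite tri_mulE // QPQ -scalemxAr -scalemxAl scalerA /tri.
have [->|e0] := eqVneq (eff P Q) 0; first by rewrite invr0 !mul0r.
by rewrite -mulrA mulVf ?mulr1.
Qed.

(* Sandwiching P Q P between two copies of Q gives lambda_PQ^2 Q. *)
Lemma tri_neq0 P Q : Q != 0 -> fob P Q -> eff P Q != 0 -> tri P Q != 0.
Proof.
move=> Q0 /eff_fob QPQ e0; apply: contraNneq Q0.
rewrite /tri => /eqP; rewrite scaler_eq0 invr_eq0 (negbTE e0) /= => /eqP PQP0.
have /eqP : Q *m (P *m Q *m P) *m Q = (eff P Q * eff P Q) *: Q.
  by rewrite !mulmxA QPQ -!scalemxAl QPQ scalerA.
by rewrite PQP0 mulmx0 mul0mx eq_sym scaler_eq0 mulf_eq0 orbb (negbTE e0).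
Qed.

Lemma vdashE P Qs : vdash P Qs = P - \sum_(Q <- Qs) tri P Q.
Proof.
rewrite /vdash big_mkcond /=; congr (_ - _); apply: eq_bigr => Q _.
by case: eqP => // /tri_eff0 ->.
Qed.

Lemma struct_bal1 P Qs Ps : P \in Ps -> struct_bal Qs Ps -> struct_bal Qs [:: P].
Proof.
move=> PPs [projPs _ projQs fobPQ orthPQ].
have sub : {subset [:: P] <= Ps} by move=> A; rewrite inE => /eqP ->.
split=> [A /sub/projPs //|A1 A2|//|A B /sub|A B1 B2 /sub]; last 2 first.
- exact: fobPQ.
- exact: orthPQ.
- by rewrite !inE => /eqP-> /eqP->; rewrite eqxx.
Qed.

Section Vdash.
Variables (P : 'M[R]_n) (Qs : seq 'M[R]_n).
Hypotheses (balP : struct_bal Qs [:: P]) (uniqQs : uniq Qs).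

Let projP : projector P.
Proof. by case: balP => + _ _ _ _; apply; rewrite mem_head. Qed.

Let projector_triQ Q : Q \in Qs -> projector (tri P Q).
Proof.
case: balP => _ _ projQs fobPQ _ QQs.
by apply: projector_tri; [|apply: projQs|apply: fobPQ; rewrite ?mem_head].
Qed.

Let tri_orthQ Q1 Q2 : Q1 \in Qs -> Q2 \in Qs -> Q1 != Q2 -> tri P Q1 *m tri P Q2 = 0.
Proof.
case: balP => _ _ _ _ orthPQ Q1s Q2s Q12.
by apply: tri_mul_tri_eq0 => //; apply: orthPQ; rewrite ?mem_head.
Qed.

Lemma sum_tri_mul_tri Q : Q \in Qs ->
  (\sum_(Q' <- Qs) tri P Q') *m tri P Q = tri P Q /\
  tri P Q *m (\sum_(Q' <- Qs) tri P Q') = tri P Q.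
Proof.
move=> QQs; have [_ idem] := projector_triQ QQs.
rewrite mulmx_suml mulmx_sumr !(bigD1_seq Q) //= idem.
by split; rewrite big1_seq ?addr0 // => Q' /andP[Q'Q Q's];
  apply: tri_orthQ; rewrite // eq_sym.
Qed.

Lemma projector_vdash : projector (vdash P Qs).
Proof.
have [PT PP] := projP; rewrite vdashE; set S := \sum_(Q <- Qs) tri P Q.
have ST : S^T = S.
  by rewrite /S raddf_sum; apply: eq_big_seq => Q /projector_triQ[].
have PS : P *m S = S by rewrite mulmx_sumr; apply: eq_bigr => Q _; apply: mul_proj_tri.
have SP : S *m P = S by rewrite mulmx_suml; apply: eq_bigr => Q _; apply: tri_mul_proj.
have SS : S *m S = S.
  by rewrite {1}/S mulmx_sumr; apply: eq_big_seq => Q /sum_tri_mul_tri[].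
split; first by rewrite linearB /= PT ST.
by rewrite mulmxBl !mulmxBr PP PS SP SS subrr subr0.
Qed.

Lemma mul_proj_vdash : P *m vdash P Qs = vdash P Qs.
Proof.
have [_ PP] := projP; rewrite vdashE mulmxBr PP mulmx_sumr.
by congr (_ - _); apply: eq_bigr => Q _; apply: mul_proj_tri.
Qed.

Lemma tri_mul_vdash Q : Q \in Qs -> tri P Q *m vdash P Qs = 0.
Proof.
move=> QQs; rewrite vdashE mulmxBr tri_mul_proj //.
by have [_ ->] := sum_tri_mul_tri QQs; rewrite subrr.
Qed.

End Vdash.

Lemma mem_triset As Bs M :
  M \in triset As Bs <-> M != 0 /\
   ((exists A B, [/\ A \in As, B \in Bs, eff A B != 0 & M = tri A B]) \/
    (exists2 A, A \in As & M = vdash A Bs)).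
Proof.
rewrite /triset mem_filter mem_cat; split.
  case/andP=> M0 /orP[/allpairsPdep [A [B [AAs BBs MAB]]] | /mapP [A AAs MA]];
    split=> //; [left | right; by exists A].
  by move: BBs; rewrite mem_filter => /andP[e0 BBs]; exists A, B.
case=> -> [[A [B [AAs BBs e0 ->]]] | [A AAs ->]] /=; apply/orP.
  by left; apply/allpairsPdep; exists A, B; rewrite mem_filter e0 BBs.
by right; apply/mapP; exists A.
Qed.

End Projectors.

Section TrisetRefinement.
Variables (R : realFieldType) (n : nat) (Ps Qs Rs : seq 'M[R]_n).
Local Notation IR := (\sum_(M <- Rs) M).

Hypotheses (Ps_neq0 : forall P, P \in Ps -> P != 0)
  (Qs_neq0 : forall Q, Q \in Qs -> Q != 0)
  (Rs_neq0 : forall Rr, Rr \in Rs -> Rr != 0)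
  (uniqQs : uniq Qs) (uniqRs : uniq Rs) (orthRs : mutually_orth Rs)
  (balQ : struct_bal Qs Ps) (balR : struct_bal Rs Ps)
  (triPQ_id : forall P Q, P \in Ps -> Q \in Qs -> P *m Q != 0 ->
     P *m IR != 0 -> tri P Q = P).

Lemma sumR_mul Rr : Rr \in Rs -> IR *m Rr = Rr.
Proof.
move=> RRs; rewrite mulmx_suml (bigD1_seq Rr) //=.
have [_ _ projRs _ _] := balR; have [_ ->] := projRs _ RRs.
by rewrite big1_seq ?addr0 // => R' /andP[R'R R's]; apply: orthRs.
Qed.

Lemma orth_sumR_mul P Rr : P \in Ps -> Rr \in Rs -> P *m IR = 0 -> Rr *m P = 0.
Proof.
move=> PPs RRs PI0; have [projPs _ projRs _ _] := balR.
apply: projector_mul_eq0C; [exact: projPs|exact: projRs|].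
by rewrite -(sumR_mul RRs) mulmxA PI0 mul0mx.
Qed.

Lemma eff_orth_sumR P Rr : P \in Ps -> Rr \in Rs -> P *m IR = 0 -> eff P Rr = 0.
Proof.
move=> PPs RRs PI0; apply: eff_unique; first exact: Rs_neq0.
by rewrite (orth_sumR_mul PPs RRs PI0) mul0mx scale0r.
Qed.

Lemma tri_id P Q : P \in Ps -> Q \in Qs -> eff P Q != 0 -> P *m IR != 0 ->
  tri P Q = P.
Proof. by move=> PPs QQs e0; apply: triPQ_id => //; apply: mul_neq0_eff; auto. Qed.

Lemma vdash_cases P : P \in Ps -> P *m IR != 0 ->
  vdash P Qs = P \/ (vdash P Qs = 0 /\ exists2 Q, Q \in Qs & eff P Q != 0).
Proof.
move=> PPs PI0; have balP := struct_bal1 PPs balQ.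
have [/hasP [Q QQs e0]|/hasPn noQ] := boolP (has (fun Q => eff P Q != 0) Qs).
  right; split; last by exists Q.
  (* P = P |> Q, and P |> Q is orthogonal to P |- Q. *)
  by rewrite -mul_proj_vdash // -{1}(tri_id PPs QQs e0 PI0) tri_mul_vdash.
left; rewrite /vdash big1_seq ?subr0 // => Q /andP[e0 QQs].
by move: (noQ _ QQs); rewrite e0.
Qed.

Definition component P A := [/\ P \in Ps, A != 0 &
   (exists Q, [/\ Q \in Qs, eff P Q != 0 & A = tri P Q]) \/ A = vdash P Qs].

Lemma mem_triset_component A : A \in triset Ps Qs <-> exists P, component P A.
Proof.
rewrite mem_triset; split.
  case=> A0 [[P [Q [PPs QQs e0 AE]]] | [P PPs AE]]; exists P;
    split => //; [left; by exists Q | by right].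
case=> P [PPs A0 [[Q [QQs e0 AE]] | AE]]; split => //.
  by left; exists P, Q.
by right; exists P.
Qed.

Lemma component_proj P A :
  component P A -> [/\ projector A, P *m A = A & A *m P = A].
Proof.
case=> PPs _; have balP := struct_bal1 PPs balQ.
have [projPs _ projQs fobPQ _] := balQ.
case=> [[Q [QQs _ ->]] | ->].
  split; [apply: projector_tri|apply: mul_proj_tri|apply: tri_mul_proj]; auto.
split; [exact: projector_vdash|exact: mul_proj_vdash|].
by apply: projector_mul_idC; [exact: projPs|exact: projector_vdash|exact: mul_proj_vdash].
Qed.

Lemma component_id P A : component P A -> P *m IR != 0 -> A = P.
Proof.
case=> PPs A0 [[Q [QQs e0 ->]] | AE] PI0; first exact: tri_id.
by case: (vdash_cases PPs PI0) => [<-|[V0 _]] //; rewrite AE V0 eqxx in A0.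
Qed.

Lemma component_sandwich P A Rr1 Rr2 : component P A -> Rr1 \in Rs -> Rr2 \in Rs ->
  Rr1 *m A *m Rr2 = Rr1 *m P *m Rr2.
Proof.
move=> cPA R1s R2s; have [PPs _ _] := cPA.
have [PI0|PI0] := eqVneq (P *m IR) 0; last by rewrite (component_id cPA PI0).
have [_ <- _] := component_proj cPA.
by rewrite mulmxA (orth_sumR_mul PPs R1s PI0) !mul0mx.
Qed.

Lemma eff_component P A Rr : component P A -> Rr \in Rs -> eff A Rr = eff P Rr.
Proof.
move=> cPA RRs; have [PPs _ _] := cPA; have [_ _ _ fobPR _] := balR.
apply: eff_unique; first exact: Rs_neq0.
by rewrite (component_sandwich cPA RRs RRs); apply/eff_fob/fobPR.
Qed.

Lemma vdash_component P A : component P A -> P *m IR = 0 -> vdash A Rs = A.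
Proof.
move=> cPA PI0; have [PPs _ _] := cPA.
rewrite /vdash big1_seq ?subr0 // => Rr /andP[+ RRs].
by rewrite (eff_component cPA RRs) (eff_orth_sumR PPs RRs PI0) eqxx.
Qed.

Lemma component_orth P1 P2 A1 A2 : component P1 A1 -> component P2 A2 ->
  A1 != A2 -> A1 *m A2 = 0.
Proof.
move=> cPA1 cPA2 A12.
have [_ _ A1P] := component_proj cPA1; have [projA2 P2A _] := component_proj cPA2.
case: cPA1 cPA2 => [P1s _ A1E] [P2s _ A2E].
have [eP|P12] := eqVneq P1 P2; last first.
  have [_ orthPs _ _ _] := balQ.
  by rewrite -A1P -P2A mulmxA -(mulmxA A1) (orthPs P1 P2) // mulmx0 mul0mx.
subst P2; have balP := struct_bal1 P1s balQ; have [_ _ _ _ orthPQ] := balQ.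
case: A1E A2E => [[Q1 [Q1s _ E1]] | E1] [[Q2 [Q2s _ E2]] | E2]; rewrite E1 E2.
- apply: tri_mul_tri_eq0; first by case: balQ => + _ _ _ _; apply.
  by apply: orthPQ => //; apply: contraNneq A12 => Q12; rewrite E1 E2 Q12.
- exact: tri_mul_vdash.
- apply: projector_mul_eq0C; [by rewrite -E2|exact: projector_vdash|exact: tri_mul_vdash].
- by rewrite E1 E2 eqxx in A12.
Qed.

Lemma mem_triset_self P : P \in Ps -> P *m IR != 0 -> P \in triset Ps Qs.
Proof.
move=> PPs PI0; apply/mem_triset_component; exists P; split; auto.
case: (vdash_cases PPs PI0) => [V|[_ [Q QQs e0]]]; first by right.
by left; exists Q; rewrite (tri_id PPs QQs e0 PI0).
Qed.

Lemma struct_bal_triset : struct_bal Rs (triset Ps Qs).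
Proof.
have [_ _ projRs fobPR orthPR] := balR.
split=> //.
- by move=> A /mem_triset_component[P /component_proj[]].
- move=> A1 A2 /mem_triset_component[P1 cPA1] /mem_triset_component[P2 cPA2].
  exact: component_orth cPA1 cPA2.
- move=> A Rr /mem_triset_component[P cPA] RRs; exists (eff P Rr).
  by rewrite (component_sandwich cPA RRs RRs); apply/eff_fob/fobPR; case: cPA.
- move=> A R1 R2 /mem_triset_component[P cPA] R1s R2s R12.
  by rewrite (component_sandwich cPA R1s R2s); apply: orthPR; case: cPA.
Qed.

Lemma eff_tri_sumR P Q Rr : P \in Ps -> Q \in Qs -> Rr \in Rs -> eff P Q != 0 ->
  eff (tri P Q) Rr = eff P Rr.
Proof.
move=> PPs QQs RRs e0; apply: eff_component RRs; split => //; last by left; exists Q.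
have [_ _ _ fobPQ _] := balQ; exact: tri_neq0 (Qs_neq0 QQs) (fobPQ _ _ PPs QQs) e0.
Qed.

Lemma eff_vdash_sumR P Rr : P \in Ps -> Rr \in Rs -> vdash P Qs != 0 ->
  eff (vdash P Qs) Rr = eff P Rr.
Proof. by move=> PPs RRs V0; apply: eff_component RRs; split => //; right. Qed.

Definition triset_refined : seq 'M[R]_n :=
  [seq M <- [seq tri P Rr | P <- Ps, Rr <- [seq Rr <- Rs | eff P Rr != 0]]
         ++ [seq vdash P Rs | P <- [seq P <- Ps | P *m IR != 0]]
         ++ [seq tri P Q | P <- [seq P <- Ps | P *m IR == 0],
                           Q <- [seq Q <- Qs | eff P Q != 0]]
         ++ [seq vdash P Qs | P <- [seq P <- Ps | P *m IR == 0]]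
    | M != 0].

Lemma triset_triset_sub M : M \in triset (triset Ps Qs) Rs -> M \in triset_refined.
Proof.
case/mem_triset=> M0 [[A [Rr [/mem_triset_component[P cPA] RRs e0 MAR]]] | [A AQ MA]].
  have [PPs _ _] := cPA.
  have [PI0|PI0] := eqVneq (P *m IR) 0.
    by rewrite (eff_component cPA RRs) (eff_orth_sumR PPs RRs PI0) eqxx in e0.
  rewrite (component_id cPA PI0) in MAR e0.
  rewrite mem_filter M0 !mem_cat; apply/orP; left; apply/allpairsPdep.
  by exists P, Rr; rewrite mem_filter e0 RRs.
have /mem_triset_component[P cPA] := AQ; have [PPs _ AE] := cPA.
rewrite mem_filter M0 !mem_cat; apply/orP; right.
have [PI0|PI0] := eqVneq (P *m IR) 0; last first.
  rewrite (component_id cPA PI0) in MA.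
  by apply/orP; left; apply/mapP; exists P; rewrite // mem_filter PI0.
rewrite (vdash_component cPA PI0) in MA; apply/orP; right.
have PI0s : P \in [seq P <- Ps | P *m IR == 0] by rewrite mem_filter PI0 eqxx.
case: AE => [[Q [QQs e0 AE]] | AE]; apply/orP; [left|right]; rewrite MA AE.
  by apply/allpairsPdep; exists P, Q; split => //; rewrite mem_filter e0 QQs.
by apply/mapP; exists P.
Qed.

Lemma component_mem_triset_triset P A : component P A -> P *m IR = 0 ->
  A \in triset (triset Ps Qs) Rs.
Proof.
move=> cPA PI0; have [_ A0 _] := cPA; apply/mem_triset; split=> //; right.
by exists A; [apply/mem_triset_component; exists P | rewrite (vdash_component cPA PI0)].
Qed.

Lemma triset_refined_sub M : M \in triset_refined -> M \in triset (triset Ps Qs) Rs.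
Proof.
rewrite mem_filter !mem_cat => /andP[M0 /or4P[]].
- case/allpairsPdep=> P [Rr [PPs + MPR]]; rewrite mem_filter => /andP[e0 RRs].
  apply/mem_triset; split=> //; left; exists P, Rr; split=> //.
  by apply: (mem_triset_self PPs); apply: contraNneq e0 => /(eff_orth_sumR PPs RRs) ->.
- case/mapP=> P; rewrite mem_filter => /andP[PI0 PPs] MP.
  by apply/mem_triset; split=> //; right; exists P => //; apply: mem_triset_self.
- case/allpairsPdep=> P [Q []]; rewrite mem_filter => /andP[/eqP PI0 PPs].
  rewrite mem_filter => /andP[e0 QQs] MPQ.
  by apply: (component_mem_triset_triset _ PI0); split=> //; left; exists Q.
- case/mapP=> P; rewrite mem_filter => /andP[/eqP PI0 PPs] MP.
  by apply: (component_mem_triset_triset _ PI0); split=> //; right.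
Qed.

End TrisetRefinement.

Unset Implicit Arguments.
Theorem theorem2 (R : realFieldType) (n : nat) (U G : 'M[R]_n)
  (Ps Qs Rs : seq 'M[R]_n) :
  orth_decomp Ps 1%:M -> orth_decomp Qs U -> orth_decomp Rs G ->
  struct_bal Qs Ps -> struct_bal Rs Ps ->
  (forall P Q, P \in Ps -> Q \in Qs -> P *m Q != 0 ->
     P *m (\sum_(M <- Rs) M) != 0 -> tri P Q = P) ->
  [/\ struct_bal Rs (triset Ps Qs),
      (forall P Q Rr, P \in Ps -> Q \in Qs -> Rr \in Rs -> eff P Q != 0 ->
         eff (tri P Q) Rr = eff P Rr),
      (forall P Rr, P \in Ps -> Rr \in Rs -> vdash P Qs != 0 ->
         eff (vdash P Qs) Rr = eff P Rr) &
      triset (triset Ps Qs) Rs =i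
      [seq M <-
         [seq tri P Rr | P <- Ps, Rr <- [seq Rr <- Rs | eff P Rr != 0]]
         ++ [seq vdash P Rs | P <- [seq P <- Ps | P *m (\sum_(M <- Rs) M) != 0]]
         ++ [seq tri P Q | P <- [seq P <- Ps | P *m (\sum_(M <- Rs) M) == 0],
                           Q <- [seq Q <- Qs | eff P Q != 0]]
         ++ [seq vdash P Qs | P <- [seq P <- Ps | P *m (\sum_(M <- Rs) M) == 0]]
       | M != 0]].
Proof.
move=> [_ decP _ _] [uniqQs decQ _ _] [uniqRs decR orthRs _] balQ balR triPQ_id.
have Ps_neq0 P : P \in Ps -> P != 0 by case/decP.
have Qs_neq0 Q : Q \in Qs -> Q != 0 by case/decQ.
have Rs_neq0 Rr : Rr \in Rs -> Rr != 0 by case/decR.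
split.
- exact: struct_bal_triset.
- exact: eff_tri_sumR.
- exact: eff_vdash_sumR.
- move=> M; apply/idP/idP; [exact: triset_triset_sub | exact: triset_refined_sub].
Qed.
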